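(* Let $|\Psi^{RQ}\rangle$ be a pure state on $\mathcal{H}_R\otimes\mathcal{H}_Q$, with $d=\dim\mathcal{H}_Q$, and let a noisy channel (CPTP map) $\mathcal{E}^Q$ from $Q$ to $Q$ act on $Q$, realized by a unitary $U^{QE}$ acting on $Q$ and an environment $E$ initially in a pure state $|E\rangle$, producing the pure state $\rho^{RQ'E'}$. Let Alice encode classical information in an ensemble $\{p_k,\rho_k^Q\}$ with $\sum_k p_k\rho_k^Q=\rho^Q=\mathrm{Tr}_R|\Psi^{RQ}\rangle\langle\Psi^{RQ}|$, and let $H_{Eve}$ be the classical information Eve obtains, which satisfies $H_{Eve}\le\chi^{E'}$. Then $$I_c(A\rangle B)+H_{Eve}\le \log d .$$
   Context: Notation: $S$ is von Neumann entropy. Bob receives $\rho_k^{Q'}=\mathcal{E}^Q(\rho_k^Q)$ and $\rho^{Q'}=\mathcal{E}^Q(\rho^Q)$; Eve (the environment) holds $\rho_k^{E'}$, $\rho^{E'}$, the corresponding reduced states of the environment after the unitary interaction. Holevo quantities: $\chi^{Q'}=S(\rho^{Q'})-\sum_k p_kS(\rho_k^{Q'})$ and $\chi^{E'}=S(\rho^{E'})-\sum_kp_kS(\rho_k^{E'})$. The coherent information is $I_c(A\rangle B)=I_c(R\rangle Q')=S(\rho^{Q'})-S(\rho^{RQ'})$, where $\rho^{RQ'}=(I^R\otimes\mathcal{E}^Q)(|\Psi^{RQ}\rangle\langle\Psi^{RQ}|)$. Standing convention of the framework (Schumacher–Westmoreland): the coherent information is identified with the difference of Holevo quantities, $I_c(A\rangle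 B)=\chi^{Q'}-\chi^{E'}$. *)

From mathcomp Require Import all_boot all_order all_algebra.
From mathcomp Require Import complex mxtens spectral.
From mathcomp Require Import all_classical all_reals exp.
Set Implicit Arguments.
Unset Strict Implicit.
Unset Printing Implicit Defensive.
Import GRing.Theory Num.Theory.
Local Open Scope ring_scope.

Section QInfo.
Variable R : realType.
Local Notation C := R[i].

Definition adj {m n} (A : 'M[C]_(m, n)) : 'M[C]_(n, m) := (map_mx conjc A)^T.

Definition psdmx {n} (A : 'M[C]_n) : Prop :=
  forall v : 'cV[C]_n, 0 <= (adj v *m A *m v) 0 0.
Definition densitymx {n} (A : 'M[C]_n) : Prop := psdmx A /\ \tr A = 1.

Definition unit_vec {n} (v : 'cV[C]_n) : Prop := adj v *m v = 1.
Definition unitary {n} (U : 'M[C]_n) : Prop := U *m adj U = 1%:M /\ adj U *m U = 1%:M.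

Definition ptrace1 {m n} (A : 'M[C]_(m * n)) : 'M[C]_n :=
  \matrix_(j, j') \sum_(i < m) A (mxtens_index (i, j)) (mxtens_index (i, j')).
Definition ptrace2 {m n} (A : 'M[C]_(m * n)) : 'M[C]_m :=
  \matrix_(i, i') \sum_(j < n) A (mxtens_index (i, j)) (mxtens_index (i', j)).

(* von Neumann entropy S(rho) = - Tr rho ln rho = - sum_i lambda_i ln lambda_i,
   with lambda_i the eigenvalues (spectral decomposition, spectral.v);
   convention 0 ln 0 = 0 (note ln 0 = 0 in mathcomp-analysis). *)
Definition xlnx (x : R) : R := x * ln x.
Definition vN_entropy {n} (rho : 'M[C]_n) : R :=
  - \sum_(i < n) xlnx (complex.Re (spectral_diag rho 0 i)).

(* Stinespring realization: Q (dim d), environment E (dim e) in pure state env,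
   unitary U on Q (x) E.  Joint output U (rho (x) |E><E|) U^dagger. *)
Definition joint_out {d e} (U : 'M[C]_(d * e)) (env : 'cV[C]_e) (rho : 'M[C]_d)
  : 'M[C]_(d * e) := U *m (rho *t (env *m adj env)) *m adj U.
(* the channel E^Q (Bob's output) and the complementary channel (Eve's output) *)
Definition chan {d e} (U : 'M[C]_(d * e)) (env : 'cV[C]_e) (rho : 'M[C]_d) : 'M[C]_d :=
  ptrace2 (joint_out U env rho).
Definition cchan {d e} (U : 'M[C]_(d * e)) (env : 'cV[C]_e) (rho : 'M[C]_d) : 'M[C]_e :=
  ptrace1 (joint_out U env rho).

(* (I^R (x) E^Q)(|Psi><Psi|) on R (x) Q', computed from the purification:
   |Psi'> = (1_R (x) U)(|Psi> (x) |E>) on R (x) (Q (x) E), then trace out E. *)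
Definition purif_in {r d e} (Psi : 'cV[C]_(r * d)) (env : 'cV[C]_e) : 'cV[C]_(r * (d * e)) :=
  \col_k (let ij := mxtens_unindex k in
          let jl := mxtens_unindex ij.2 in
          Psi (mxtens_index (ij.1, jl.1)) 0 * env jl.2 0).
Definition purif_out {r d e} (Psi : 'cV[C]_(r * d)) (U : 'M[C]_(d * e)) (env : 'cV[C]_e)
  : 'cV[C]_(r * (d * e)) := ((1%:M : 'M[C]_r) *t U) *m purif_in Psi env.
Definition rhoRQ' {r d e} (Psi : 'cV[C]_(r * d)) (U : 'M[C]_(d * e)) (env : 'cV[C]_e)
  : 'M[C]_(r * d) :=
  let rho := purif_out Psi U env *m adj (purif_out Psi U env) in
  \matrix_(k, k') (let ij := mxtens_unindex k in let ij' := mxtens_unindex k' in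
     \sum_(l < e) rho (mxtens_index (ij.1, mxtens_index (ij.2, l)))
                      (mxtens_index (ij'.1, mxtens_index (ij'.2, l)))).

Definition coh_info {r d e} (Psi : 'cV[C]_(r * d)) (U : 'M[C]_(d * e)) (env : 'cV[C]_e) : R :=
  vN_entropy (chan U env (ptrace1 (Psi *m adj Psi))) - vN_entropy (rhoRQ' Psi U env).

Definition holevo {K : finType} {n} (p : K -> R) (sigma_k : K -> 'M[C]_n) (sigma : 'M[C]_n) : R :=
  vN_entropy sigma - \sum_(k : K) p k * vN_entropy (sigma_k k).

End QInfo.

(* With the convention I_c = chi^{Q'} - chi^{E'} and H_Eve <= chi^{E'}, the left-hand
   side is at most chi^{Q'}.  Every channel output is again a density matrix (the
   channel is a partial trace of an isometric conjugation), so its entropy is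
   nonnegative and chi^{Q'} <= S(rho^{Q'}).  Finally the entropy of a density matrix on
   a d-dimensional space is at most ln d: summing the tangent inequality
   x ln(1/d) + x - 1/d <= x ln x over its eigenvalues gives Gibbs' inequality. *)

From mathcomp Require Import all_boot all_order all_algebra.
From mathcomp Require Import complex mxtens spectral.
From mathcomp Require Import all_classical all_reals exp.
From mathcomp Require Import lra.
Set Implicit Arguments.
Unset Strict Implicit.
Unset Printing Implicit Defensive.
Import Order.TTheory GRing.Theory Num.Theory.
Local Open Scope sesquilinear_scope.
Local Open Scope ring_scope.

Lemma sumr_delta_l (S : pzSemiRingType) (T : finType) (k : T) (F : T -> S) :
  \sum_a (a == k)%:R * F a = F k.
Proof.
by rewrite (bigD1 k) //= eqxx mul1r big1 ?addr0 // => a /negbTE->; rewrite mul0r.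
Qed.

Lemma sumr_delta_r (S : pzSemiRingType) (T : finType) (k : T) (F : T -> S) :
  \sum_a F a * (a == k)%:R = F k.
Proof.
by rewrite (bigD1 k) //= eqxx mulr1 big1 ?addr0 // => a /negbTE->; rewrite mulr0.
Qed.

Lemma sum_mxtens_index (V : nmodType) m n (F : 'I_(m * n) -> V) :
  \sum_a F a = \sum_i \sum_j F (mxtens_index (i, j)).
Proof.
rewrite pair_big /= (reindex (@mxtens_index m n)) /=; last first.
  by exists (@mxtens_unindex m n) => x _; rewrite (mxtens_indexK, mxtens_unindexK).
by apply: eq_bigr => -[].
Qed.

Section ShannonEntropy.
Variable R : realType.

Lemma ln_le_subr1 (y : R) : 0 < y -> ln y <= y - 1.
Proof.
by move=> y_gt0; have := @le_ln1Dx R (y - 1); rewrite addrCA subrr addr0; apply; lra.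
Qed.

Lemma xlnx_le0 (x : R) : 0 <= x -> x <= 1 -> xlnx x <= 0.
Proof. by move=> x_ge0 x_le1; exact: mulr_ge0_le0 x_ge0 (ln_le0 x_le1). Qed.

Lemma xlnx_ge_tangent (x c : R) : 0 <= x -> 0 < c -> x * ln c + x - c <= xlnx x.
Proof.
rewrite /xlnx le_eqVlt => /predU1P[<- c_gt0|x_gt0 c_gt0]; first by rewrite !mul0r; lra.
have := ln_le_subr1 (divr_gt0 c_gt0 x_gt0).
rewrite lnM ?posrE ?invr_gt0 // lnV ?posrE // => /(ler_wpM2l (ltW x_gt0)).
by rewrite mulrBr mulrDr mulrCA divff ?gt_eqF // mulrN1 mulr1; lra.
Qed.

Variables (I : finType) (l : I -> R).
Hypotheses (l_ge0 : forall i, 0 <= l i) (l_sum1 : \sum_i l i = 1).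

Lemma entropy_ge0 : 0 <= - \sum_i xlnx (l i).
Proof.
rewrite oppr_ge0; apply: sumr_le0 => i _; apply: xlnx_le0 => //.
by rewrite -l_sum1 (bigD1 i) //= lerDl sumr_ge0.
Qed.

Lemma entropy_le_ln_card : - \sum_i xlnx (l i) <= ln #|I|%:R.
Proof.
have I_gt0 : (0 < #|I|)%N.
  case: (pickP I) => [i _|I0]; first by apply/card_gt0P; exists i.
  by move: l_sum1; rewrite big1 // => [/eqP|i]; [rewrite eq_sym oner_eq0 | have := I0 i].
have N_gt0 : 0 < #|I|%:R^-1 :> R by rewrite invr_gt0 ltr0n.
rewrite lerNl; apply: le_trans (ler_sum _ (fun i _ => xlnx_ge_tangent (l_ge0 i) N_gt0)).
rewrite !big_split /= -mulr_suml l_sum1 sumr_const mul1r lnV ?posrE ?ltr0n //.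
by rewrite mulNrn -[_^-1 *+ _]mulr_natl mulfV ?pnatr_eq0 -?lt0n //; lra.
Qed.

End ShannonEntropy.

Section DensityMatrices.
Variable R : realType.
Local Notation C := R[i].

Lemma adjK m n (A : 'M[C]_(m, n)) : adj (adj A) = A.
Proof. by apply/matrixP => a b; rewrite !mxE /= conjcK. Qed.

Lemma adjM m n p (A : 'M[C]_(m, n)) (B : 'M[C]_(n, p)) : adj (A *m B) = adj B *m adj A.
Proof. by rewrite /adj map_mxM trmx_mul. Qed.

Lemma psdmx1 n : psdmx (1%:M : 'M[C]_n).
Proof.
move=> v; rewrite mulmx1 mxE; apply: sumr_ge0 => i _.
by rewrite !mxE mulrC mul_conjC_ge0.
Qed.

Lemma psdmx_conj m n (B : 'M[C]_(m, n)) (A : 'M[C]_n) :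
  psdmx A -> psdmx (B *m A *m adj B).
Proof. by move=> A_psd v; have := A_psd (adj B *m v); rewrite adjM adjK !mulmxA. Qed.

Lemma psdmx_sum (I : finType) n (A : I -> 'M[C]_n) :
  (forall j, psdmx (A j)) -> psdmx (\sum_j A j).
Proof.
move=> A_psd v; rewrite mulmx_sumr mulmx_suml summxE.
by apply: sumr_ge0 => j _; exact: A_psd.
Qed.

Lemma densitymx_conj_isometry m n (V : 'M[C]_(m, n)) (A : 'M[C]_n) :
  adj V *m V = 1%:M -> densitymx A -> densitymx (V *m A *m adj V).
Proof.
move=> V_iso [A_psd trA]; split; first exact: psdmx_conj.
by rewrite mxtrace_mulC mulmxA V_iso mul1mx.
Qed.

Lemma densitymx_outer n (v : 'cV[C]_n) : unit_vec v -> densitymx (v *m adj v).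
Proof.
move=> v_unit; rewrite -[v in v *m _]mulmx1.
by apply: densitymx_conj_isometry => //; split; [exact: psdmx1 | rewrite mxtrace1].
Qed.

Lemma adj_trmxC m n (A : 'M[C]_(m, n)) : adj A = A^t*.
Proof. by apply/matrixP => a b; rewrite !mxE. Qed.

Lemma conj_adj_diag m n (B : 'M[C]_(m, n)) (A : 'M[C]_n) i :
  (B *m A *m adj B) i i = (row i B *m A *m adj (row i B)) 0 0.
Proof. by rewrite -row_mul !mxE; apply: eq_bigr => k _; rewrite !mxE. Qed.

(* Density matrices are normal, but we never need this: [spectral_diag] is the junk
   value [0] on non-normal matrices, which has zero entropy. *)
Lemma spectral_diag_nonnormal n (A : 'M[C]_n) :
  A \isn't normalmx -> spectral_diag A = 0.
Proof.
rewrite /spectral_diag => A_nonnormal; case: orthomx_spectral_subproof => // A_normal.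
by move: A_nonnormal => /orthomx_spectral_subproof.
Qed.

Lemma psdmx_spectral_diag_ge0 n (A : 'M[C]_n) i :
  psdmx A -> 0 <= spectral_diag A 0 i.
Proof.
move=> A_psd.
have [A_normal|/spectral_diag_nonnormal->] := boolP (A \is normalmx); last by rewrite mxE.
set P := spectralmx A; set D := spectral_diag A.
have P_unit : P \in unitmx := spectral_unit A.
have diagE : diag_mx D = P *m A *m adj P.
  rewrite adj_trmxC -invmx_unitary ?spectral_unitarymx //.
  rewrite (orthomx_spectralP A_normal) -/P -/D.
  by rewrite !mulmxA mulmxV // mul1mx mulmxK.
have := A_psd (adj (row i P)); rewrite adjK -conj_adj_diag -diagE.
by rewrite mxE eqxx mulr1n.
Qed.

Lemma sum_spectral_diag n (A : 'M[C]_n) :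
  A \is normalmx -> \sum_i spectral_diag A 0 i = \tr A.
Proof.
move=> /orthomx_spectralP {2}->; rewrite mxtrace_mulC mulmxA mulmxV ?spectral_unit //.
by rewrite mul1mx mxtrace_diag.
Qed.

Lemma density_spectrum n (A : 'M[C]_n) : densitymx A -> A \is normalmx ->
  (forall i, 0 <= complex.Re (spectral_diag A 0 i)) /\
  \sum_i complex.Re (spectral_diag A 0 i) = 1.
Proof.
move=> [A_psd trA] A_normal; split=> [i|].
  by have := psdmx_spectral_diag_ge0 i A_psd; rewrite lecE => /andP[].
by rewrite -(raddf_sum (@complex.Re R : Rcomplex R -> R)) sum_spectral_diag ?trA.
Qed.

Lemma vN_entropy_nonnormal n (A : 'M[C]_n) : A \isn't normalmx -> vN_entropy A = 0.
Proof.
move=> /spectral_diag_nonnormal DA; rewrite /vN_entropy big1 ?oppr0 // => i _.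
by rewrite DA mxE /xlnx mul0r.
Qed.

Lemma vN_entropy_ge0 n (A : 'M[C]_n) : densitymx A -> 0 <= vN_entropy A.
Proof.
move=> A_density; have [A_normal|/vN_entropy_nonnormal->//] := boolP (A \is normalmx).
by have [] := density_spectrum A_density A_normal; exact: entropy_ge0.
Qed.

Lemma vN_entropy_le_ln_dim n (A : 'M[C]_n) : densitymx A -> vN_entropy A <= ln n%:R.
Proof.
move=> A_density; have [A_normal|/vN_entropy_nonnormal->] := boolP (A \is normalmx).
  have [D_ge0 D_sum1] := density_spectrum A_density A_normal.
  by have := entropy_le_ln_card D_ge0 D_sum1; rewrite card_ord.
by case: n {A A_density} => [|n]; [rewrite ln0 | rewrite ln_ge0 // ler1n].
Qed.

Lemma holevo_le_vN_entropy (K : finType) n (p : K -> R)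
    (sigma_k : K -> 'M[C]_n) (sigma : 'M[C]_n) :
  (forall k, 0 <= p k) -> (forall k, densitymx (sigma_k k)) ->
  holevo p sigma_k sigma <= vN_entropy sigma.
Proof.
move=> p_ge0 sigma_density; rewrite /holevo lerBlDr lerDl.
by apply: sumr_ge0 => k _; rewrite mulr_ge0 ?vN_entropy_ge0.
Qed.

End DensityMatrices.

Section Channels.
Variable R : realType.
Local Notation C := R[i].

Definition slice1 m n (i : 'I_m) : 'M[C]_(n, m * n) :=
  \matrix_(j, a) (a == mxtens_index (i, j))%:R.
Definition slice2 m n (j : 'I_n) : 'M[C]_(m, m * n) :=
  \matrix_(i, a) (a == mxtens_index (i, j))%:R.

Lemma ptrace1E m n (M : 'M[C]_(m * n)) :
  ptrace1 M = \sum_i slice1 n i *m M *m adj (slice1 n i).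
Proof.
apply/matrixP => j j'; rewrite !mxE summxE; apply: eq_bigr => i _.
rewrite mxE; under eq_bigr do rewrite !mxE conjc_nat.
by rewrite sumr_delta_r; under eq_bigr do rewrite !mxE; rewrite sumr_delta_l.
Qed.

Lemma ptrace2E m n (M : 'M[C]_(m * n)) :
  ptrace2 M = \sum_j slice2 m j *m M *m adj (slice2 m j).
Proof.
apply/matrixP => i i'; rewrite !mxE summxE; apply: eq_bigr => j _.
rewrite mxE; under eq_bigr do rewrite !mxE conjc_nat.
by rewrite sumr_delta_r; under eq_bigr do rewrite !mxE; rewrite sumr_delta_l.
Qed.

Lemma mxtrace_ptrace1 m n (M : 'M[C]_(m * n)) : \tr (ptrace1 M) = \tr M.
Proof.
by rewrite /mxtrace sum_mxtens_index exchange_big; apply: eq_bigr => i _; rewrite mxE.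
Qed.

Lemma mxtrace_ptrace2 m n (M : 'M[C]_(m * n)) : \tr (ptrace2 M) = \tr M.
Proof. by rewrite /mxtrace sum_mxtens_index; apply: eq_bigr => i _; rewrite mxE. Qed.

Lemma densitymx_ptrace1 m n (M : 'M[C]_(m * n)) : densitymx M -> densitymx (ptrace1 M).
Proof.
move=> [M_psd trM]; rewrite ptrace1E; split; last by rewrite -ptrace1E mxtrace_ptrace1.
by apply: psdmx_sum => i; exact: psdmx_conj.
Qed.

Lemma densitymx_ptrace2 m n (M : 'M[C]_(m * n)) : densitymx M -> densitymx (ptrace2 M).
Proof.
move=> [M_psd trM]; rewrite ptrace2E; split; last by rewrite -ptrace2E mxtrace_ptrace2.
by apply: psdmx_sum => j; exact: psdmx_conj.
Qed.

Definition env_embed d e (env : 'cV[C]_e) : 'M[C]_(d * e, d) :=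
  \matrix_(a, k) (((mxtens_unindex a).1 == k)%:R * env (mxtens_unindex a).2 0).

Lemma env_embedE d e (env : 'cV[C]_e) i j k :
  env_embed d env (mxtens_index (i, j)) k = (k == i)%:R * env j 0.
Proof. by rewrite mxE mxtens_indexK /= eq_sym. Qed.

Lemma env_embed_isometry d e (env : 'cV[C]_e) :
  unit_vec env -> adj (env_embed d env) *m env_embed d env = 1%:M.
Proof.
move=> env_unit; have env_norm : \sum_j (env j 0)^*%C * env j 0 = 1.
  have := congr1 (fun M : 'M[C]_1 => M 0 0) env_unit; rewrite !mxE eqxx mulr1n => <-.
  by apply: eq_bigr => j _; rewrite !mxE.
apply/matrixP => k k'; rewrite !mxE sum_mxtens_index.
under eq_bigr => i _ do under eq_bigr => j _ do
  rewrite !mxE mxtens_indexK /= rmorphM /= conjc_nat mulrACA.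
under eq_bigr => i _ do rewrite -mulr_sumr env_norm mulr1.
by rewrite sumr_delta_l.
Qed.

Lemma env_embed_mulE d e (env : 'cV[C]_e) (rho : 'M[C]_d) i j k :
  (env_embed d env *m rho) (mxtens_index (i, j)) k = env j 0 * rho i k.
Proof.
by rewrite mxE; under eq_bigr do rewrite env_embedE -mulrA; rewrite sumr_delta_l.
Qed.

Lemma tens_outer_envE d e (env : 'cV[C]_e) (rho : 'M[C]_d) :
  rho *t (env *m adj env) = env_embed d env *m rho *m adj (env_embed d env).
Proof.
apply/matrixP => a b.
case: (mxtens_indexP a) => i j; case: (mxtens_indexP b) => k l.
rewrite tensmxE [RHS]mxE.
under [RHS]eq_bigr => x _ do
  rewrite env_embed_mulE 2!mxE env_embedE rmorphM /= conjc_nat mulrCA mulrC.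
rewrite sumr_delta_r mxE big_ord1 !mxE.
by rewrite mulrC -!mulrA (mulrC (rho i k)).
Qed.

Lemma joint_outE d e (U : 'M[C]_(d * e)) (env : 'cV[C]_e) (rho : 'M[C]_d) :
  joint_out U env rho = (U *m env_embed d env) *m rho *m adj (U *m env_embed d env).
Proof. by rewrite /joint_out tens_outer_envE adjM !mulmxA. Qed.

Lemma densitymx_chan d e (U : 'M[C]_(d * e)) (env : 'cV[C]_e) (rho : 'M[C]_d) :
  unitary U -> unit_vec env -> densitymx rho -> densitymx (chan U env rho).
Proof.
move=> [_ UU] env_unit rho_density; apply: densitymx_ptrace2; rewrite joint_outE.
apply: densitymx_conj_isometry rho_density.
by rewrite adjM mulmxA -(mulmxA (adj _)) UU mulmx1 env_embed_isometry.
Qed.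

End Channels.

Theorem mainTheorem1 (R : realType) (r d e : nat)
  (Psi : 'cV[R[i]]_(r * d)) (U : 'M[R[i]]_(d * e)) (env : 'cV[R[i]]_e)
  (K : finType) (p : K -> R) (rho_k : K -> 'M[R[i]]_d) (H_Eve : R) :
  unit_vec Psi -> unitary U -> unit_vec env ->
  (forall k, 0 <= p k) -> \sum_(k : K) p k = 1 ->
  (forall k, densitymx (rho_k k)) ->
  \sum_(k : K) ((p k)%:C)%C *: rho_k k = ptrace1 (Psi *m adj Psi) ->
  let rhoQ := ptrace1 (Psi *m adj Psi) in
  let chiQ := holevo p (fun k => chan U env (rho_k k)) (chan U env rhoQ) in
  let chiE := holevo p (fun k => cchan U env (rho_k k)) (cchan U env rhoQ) in
  coh_info Psi U env = chiQ - chiE ->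
  H_Eve <= chiE ->
  coh_info Psi U env + H_Eve <= ln (d%:R).
Proof.
move=> Psi_unit U_unitary env_unit p_ge0 _ rho_k_density _ rhoQ chiQ chiE -> HEve_le.
have rhoQ'_density : densitymx (chan U env rhoQ).
  exact/densitymx_chan/densitymx_ptrace1/densitymx_outer.
have chiQ_le : chiQ <= ln d%:R.
  apply: le_trans (vN_entropy_le_ln_dim rhoQ'_density).
  by apply: holevo_le_vN_entropy => // k; exact: densitymx_chan.
lra.
Qed.
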